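(* For positive integers $n,r,k$ with $n\ge 2(k+r)$, $$\gamma_k(K(n,r))\ \ge\ \gamma_k(K(n+1,r)).$$
   Context: For integers $n\ge 2r$, the Kneser graph $K(n,r)$ has as vertices the $r$-element subsets of $[n]=\{1,\dots,n\}$, two vertices being adjacent iff they are disjoint. For a graph $G$ and positive integer $k$, a set $D\subseteq V(G)$ is $k$-dominating if every vertex $u\in V(G)\setminus D$ has at least $k$ neighbors in $D$; $\gamma_k(G)$ is the minimum cardinality of a $k$-dominating set. *)

From HB Require Import structures.
From mathcomp Require Import all_boot.
Set Implicit Arguments. Unset Strict Implicit. Unset Printing Implicit Defensive.

Definition kneser_vertex (n r : nat) : Type :=
  {A : {set 'I_n} | #|A| == r}.

Definition kneser_adj (n r : nat) : rel (kneser_vertex n r) :=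
  fun A B => [disjoint val A & val B].

Definition k_dominating (T : finType) (e : rel T) (k : nat) (D : {set T}) : bool :=
  [forall u, (u \notin D) ==> (k <= #|[set v in D | e u v]|)].

(* gamma_k : minimum cardinality of a k-dominating set (the full vertex set
   is always k-dominating, so the minimum exists). *)
Definition gamma_k (T : finType) (e : rel T) (k : nat) : nat :=
  #|[arg min_(D < [set: T] | k_dominating e k D) #|D|]|.

From mathcomp Require Import all_boot zify.
Set Implicit Arguments. Unset Strict Implicit. Unset Printing Implicit Defensive.

(* Let F be a minimum k-dominating family of r-subsets of [n].  If F contained
   the whole star {A + y : y not in A} of some (r-1)-set A, we could trade k+1
   sets of that star for k r-sets avoiding A and the k+1 chosen points; since
   n >= 2(k+r) the new family is still k-dominating, contradicting minimality.
   Hence every (r-1)-set A has some A + y missing from F.  Then F stays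
   k-dominating in K(n+1,r): an r-set A + {n} through the new point is
   disjoint from the k neighbours in F of the missing set A + y. *)

Section GammaK.
Variables (T : finType) (e : rel T) (k : nat).

Lemma k_dominatingT : k_dominating e k [set: T].
Proof. by apply/forallP => u; rewrite in_setT. Qed.

Lemma gamma_kP : exists2 D, k_dominating e k D & gamma_k e k = #|D|.
Proof.
rewrite /gamma_k; case: arg_minnP => [|D Dk _]; first exact: k_dominatingT.
by exists D.
Qed.

Lemma gamma_k_leq_card D : k_dominating e k D -> gamma_k e k <= #|D|.
Proof.
rewrite /gamma_k; case: arg_minnP => [|D0 _ D0min]; first exact: k_dominatingT.
exact: D0min.
Qed.

End GammaK.

Section KneserFamilies.
Variables (T : finType) (r k : nat).
Implicit Types (A S : {set T}) (F : {set {set T}}).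

Definition uniform F := {in F, forall S, #|S| = r}.

Definition kneser_dominating F :=
  forall S, #|S| = r -> S \notin F -> k <= #|[set S' in F | [disjoint S & S']]|.

Definition star_free F :=
  forall A, #|A|.+1 = r -> exists2 y, y \notin A & y |: A \notin F.

End KneserFamilies.

Lemma exists_subset_card (T : finType) (A : {set T}) m :
  m <= #|A| -> exists2 B : {set T}, B \subset A & #|B| = m.
Proof.
elim: m => [|m IHm] mA; first by exists set0; rewrite ?sub0set ?cards0.
have [B BA cardB] := IHm (ltnW mA).
have /card_gt0P[x] : 0 < #|A :\: B|.
  by rewrite cardsD (setIidPr BA) cardB subn_gt0.
rewrite inE => /andP[xB xA].
by exists (x |: B); rewrite ?subUset ?sub1set ?xA ?BA // cardsU1 xB cardB.
Qed.

Section Stars.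
Variable T : finType.
Implicit Types A Y Z : {set T}.

Lemma setU1_inj_notin A : {in ~: A &, injective (fun y => y |: A)}.
Proof.
move=> y y'; rewrite !inE => yA _ eq_yA.
have : y \in y' |: A by rewrite -eq_yA setU11.
by rewrite in_setU1 (negbTE yA) orbF => /eqP.
Qed.

Lemma card_star A Y : [disjoint Y & A] -> #|[set y |: A | y in Y]| = #|Y|.
Proof.
rewrite disjoints_subset => /subsetP YA.
by rewrite card_in_imset // => y y' /YA yA /YA y'A; apply: setU1_inj_notin.
Qed.

Lemma exists_uniform_family_in Z m j : m + j <= #|Z| ->
  exists2 N : {set {set T}},
    #|N| = j /\ uniform m.+1 N & {in N, forall S : {set T}, S \subset Z}.
Proof.
move=> mjZ.
have [W WZ cardW] := exists_subset_card (leq_trans (leq_addr j m) mjZ).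
have [X XZW cardX] : exists2 X : {set T}, X \subset Z :\: W & #|X| = j.
  by apply: exists_subset_card; rewrite cardsD (setIidPr WZ) cardW; lia.
move: XZW; rewrite setDE subsetI -disjoints_subset => /andP[XZ XW].
exists [set x |: W | x in X]; first split.
- by rewrite card_star.
- move=> _ /imsetP[x xX ->]; by rewrite cardsU1 (disjointFr XW xX) cardW.
- move=> _ /imsetP[x xX ->]; by rewrite subUset sub1set (subsetP XZ) ?WZ.
Qed.

End Stars.

Section KneserGraph.
Variables (n r k : nat).
Implicit Type F : {set {set 'I_n}}.
Local Notation V := (kneser_vertex n r).

Lemma card_val_preim F : uniform r F -> #|val @^-1: F : {set V}| = #|F|.
Proof.
move=> Fr; rewrite cardsE card_preim; last exact: val_inj.
apply: eq_card => S /=; rewrite !inE andbC; case SF: (S \in F) => //=.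
by apply/codomP; exists (Sub S (introT eqP (Fr S SF))).
Qed.

Lemma kneser_dominating_val (D : {set V}) :
  k_dominating (@kneser_adj n r) k D -> kneser_dominating r k (val @: D).
Proof.
move=> /forallP Dk S cardS SD.
have [u uS] : exists u : V, val u = S by exists (Sub S (introT eqP cardS)).
have uD : u \notin D by apply: contra SD => uD; rewrite -uS imset_f.
apply: leq_trans (implyP (Dk u) uD) _.
rewrite -(card_imset _ val_inj); apply: subset_leq_card.
apply/subsetP => _ /imsetP[v /setIdP[vD uv] ->].
by rewrite inE imset_f //= -uS.
Qed.

Lemma k_dominating_val_preim F : uniform r F -> kneser_dominating r k F ->
  k_dominating (@kneser_adj n r) k (val @^-1: F).
Proof.
move=> Fr Fdom; apply/forallP => u; apply/implyP; rewrite inE => uF.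
have -> : [set v in val @^-1: F | kneser_adj u v] =
          val @^-1: [set S' in F | [disjoint val u & S']].
  by apply/setP => v; rewrite !inE.
rewrite card_val_preim; first exact: Fdom (eqP (valP u)) uF.
by move=> S /setIdP[SF _]; apply: Fr.
Qed.

Lemma gamma_k_kneser_le F : uniform r F -> kneser_dominating r k F ->
  gamma_k (@kneser_adj n r) k <= #|F|.
Proof.
move=> Fr Fdom; rewrite -(card_val_preim Fr).
exact/gamma_k_leq_card/k_dominating_val_preim.
Qed.

Lemma gamma_k_kneser_attained :
  exists2 F : {set {set 'I_n}}, uniform r F /\ kneser_dominating r k F &
                                #|F| = gamma_k (@kneser_adj n r) k.
Proof.
have [D Dk ->] := gamma_kP (@kneser_adj n r) k.
exists (val @: D); last exact: card_imset val_inj.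
split; last exact: kneser_dominating_val.
by move=> _ /imsetP[v _ ->]; apply/eqP/(valP v).
Qed.

End KneserGraph.

Section StarReplacement.
Variables (T : finType) (r k : nat) (F : {set {set T}}).
Hypotheses (Fr : uniform r F) (Fdom : kneser_dominating r k F).
Hypothesis large : 2 * (k + r) <= #|T|.
Implicit Types (A S : {set T}) (G : {set {set T}}).

Section Replace.
Variables (A Y : {set T}) (N : {set {set T}}).
Hypotheses (cardA : #|A|.+1 = r) (Fstar : forall y, y \notin A -> y |: A \in F).
Hypotheses (YA : [disjoint Y & A]) (cardY : #|Y| = k.+1).
Hypotheses (cardN : #|N| = k) (Nr : uniform r N).
Hypothesis N_avoid : {in N, forall S, [disjoint S & A :|: Y]}.

Let R := [set y |: A | y in Y].
Let G := (F :\: R) :|: N.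

Lemma star_subset : R \subset F.
Proof.
by apply/subsetP => _ /imsetP[y yY ->]; rewrite Fstar // (disjointFr YA yY).
Qed.

Lemma card_replaced_lt : #|G| < #|F|.
Proof.
have RF := star_subset; have := subset_leq_card RF.
rewrite cardsU cardsD (setIidPr RF) card_star // cardY cardN => kF.
by rewrite (leq_ltn_trans (leq_subr _ _)) // -addSn subnSK // subnK // ltnW.
Qed.

Lemma uniform_replaced : uniform r G.
Proof. by move=> S; rewrite !inE => /orP[/andP[_ /Fr] | /Nr]. Qed.

Lemma replaced_dominating : kneser_dominating r k G.
Proof.
move=> S cardS SG.
have [/imsetP[y yY ->] | SR] := boolP (S \in R).
  rewrite -cardN; apply: subset_leq_card; apply/subsetP => S' S'N.
  rewrite !inE S'N orbT /= disjoint_sym; apply: disjointWr (N_avoid S'N).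
  by rewrite subUset sub1set !inE yY orbT subsetUl.
have SF : S \notin F by apply: contra SG => SF; rewrite !inE SF SR.
have [SA | SA] := boolP [disjoint S & A]; last first.
  apply: leq_trans (Fdom cardS SF) _; apply: subset_leq_card.
  apply/subsetP => S'; rewrite !inE => /andP[S'F SS'].
  rewrite S'F SS' !andbT; apply/orP; left.
  apply: contraNN SA => /imsetP[y _ S'E].
  by apply: disjointWr SS'; rewrite S'E subsetUr.
(* by [large], at least k star sets avoid both Y and S *)
pose X := ~: (A :|: Y :|: S).
have XA : [disjoint X & A] by rewrite disjoints_subset setCS -setUA subsetUl.
apply: (@leq_trans #|[set y |: A | y in X]|).
  have U1 := (leq_card_setU (A :|: Y) S).1; have U2 := (leq_card_setU A Y).1.
  rewrite card_star // [#|X|]cardsCs setCK; lia.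
apply: subset_leq_card; apply/subsetP => _ /imsetP[y yX ->].
move: (yX); rewrite !inE !negb_or => /andP[/andP[yA yY] yS].
rewrite Fstar // andbT /= disjoint_sym disjoints_subset subUset sub1set.
rewrite inE yS /=.
rewrite -disjoints_subset disjoint_sym SA andbT; apply/orP; left.
apply/imsetP => -[y' y'Y /setU1_inj_notin yy'].
by move: yY; rewrite yy' ?y'Y // !inE ?yA ?(disjointFr YA y'Y).
Qed.

End Replace.

Lemma shrink_full_star A : #|A|.+1 = r ->
    (forall y, y \notin A -> y |: A \in F) ->
  exists2 G : {set {set T}},
    uniform r G /\ kneser_dominating r k G & #|G| < #|F|.
Proof.
move=> cardA Fstar.
have [Y YA cardY] : exists2 Y : {set T}, Y \subset ~: A & #|Y| = k.+1.
  by apply: exists_subset_card; have := cardsC A; lia.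
have [N [cardN Nr] NZ] : exists2 N : {set {set T}},
    #|N| = k /\ uniform #|A|.+1 N & {in N, forall S, S \subset ~: (A :|: Y)}.
  apply: exists_uniform_family_in.
  by have := cardsC (A :|: Y); have := (leq_card_setU A Y).1; lia.
rewrite cardA in Nr; rewrite -disjoints_subset in YA.
have N_avoid S : S \in N -> [disjoint S & A :|: Y].
  by rewrite disjoints_subset => /NZ.
exists ((F :\: [set y |: A | y in Y]) :|: N); first split.
- exact: uniform_replaced.
- exact: replaced_dominating.
- exact: card_replaced_lt.
Qed.

Lemma minimal_star_free :
  (forall G, uniform r G -> kneser_dominating r k G -> #|F| <= #|G|) ->
  star_free r F.
Proof.
move=> Fmin A cardA.
case: (pickP [pred y | (y \notin A) && (y |: A \notin F)]) => [y /andP[]|noy].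
  by exists y.
have Fstar y : y \notin A -> y |: A \in F.
  by move=> yA; apply/negPn/negP => yF; move: (noy y); rewrite /= yA yF.
have [G [Gr Gdom] GF] := shrink_full_star cardA Fstar.
by have := Fmin G Gr Gdom; rewrite leqNgt GF.
Qed.

End StarReplacement.

Section Lift.
Variables (T T' : finType) (f : T -> T') (x0 : T') (r k : nat).
Hypothesis f_inj : injective f.
Hypothesis codom_f : forall x, (x \in codom f) = (x != x0).
Implicit Types (F : {set {set T}}) (P Q : {set T}) (U : {set T'}).

Lemma uniform_imset F :
  uniform r F -> uniform r [set f @: S | S : {set T} in F].
Proof. by move=> Fr _ /imsetP[S SF ->]; rewrite card_imset ?Fr. Qed.

Lemma disjoint_imset_preim U P Q :
  f @^-1: U \subset P -> [disjoint P & Q] -> [disjoint U & f @: Q].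
Proof.
move=> UP PQ; rewrite disjoint_sym disjoints_subset sub_imset_pre preimsetC.
by rewrite -disjoints_subset disjoint_sym (disjointWl UP PQ).
Qed.

Lemma card_preimset_codom U : #|f @^-1: U| = #|U :\ x0|.
Proof.
rewrite cardsE card_preim //; apply: eq_card => x.
by rewrite !inE codom_f andbC.
Qed.

Lemma lift_dominating F :
    uniform r F -> kneser_dominating r k F -> star_free r F ->
  kneser_dominating r k [set f @: S | S : {set T} in F].
Proof.
move=> Fr Fdom Fstar U cardU UF.
have [P [cardP PF UP]] :
    exists P, [/\ #|P| = r, P \notin F & f @^-1: U \subset P].
  (* the old part of [U], completed by a missing star point if [x0 \in U] *)
  have := cardsD1 x0 U; rewrite -card_preimset_codom cardU.
  case: (x0 \in U); rewrite ?add1n ?add0n => preU.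
  - have [y yU yF] := Fstar _ (esym preU).
    by exists (y |: f @^-1: U); rewrite cardsU1 yU preU subsetUr.
  - exists (f @^-1: U); split; [by rewrite preU | | exact: subxx].
    apply: contra UF => PF; apply/imsetP; exists (f @^-1: U) => //.
    apply/eqP; rewrite eq_sym eqEcard sub_imset_pre subxx card_imset //.
    by rewrite cardU preU /=.
apply: leq_trans (Fdom _ cardP PF) _.
rewrite -(card_imset _ (imset_inj f_inj)); apply: subset_leq_card.
apply/subsetP => _ /imsetP[Q /setIdP[QF PQ] ->].
by rewrite inE imset_f //= (disjoint_imset_preim UP PQ).
Qed.

End Lift.

Lemma codom_lift_max n (i : 'I_n.+1) :
  (i \in codom (lift ord_max)) = (i != ord_max).
Proof.
case: (unliftP ord_max i) => [j -> | ->].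
  by rewrite codom_f eq_sym neq_lift.
rewrite eqxx; apply/negbTE/codomP => -[j /eqP].
by rewrite (negbTE (neq_lift _ _)).
Qed.

Theorem theorem2p3 (n r k : nat) (hr : 0 < r) (hk : 0 < k)
  (hnrk : 2 * (k + r) <= n) :
  gamma_k (@kneser_adj n.+1 r) k <= gamma_k (@kneser_adj n r) k.
Proof.
have [F [Fr Fdom] FE] := gamma_k_kneser_attained n r k.
have Fstar : star_free r F.
  apply: (minimal_star_free Fr Fdom); first by rewrite card_ord.
  by move=> G Gr Gdom; rewrite FE gamma_k_kneser_le.
have lift_max_inj := @lift_inj n.+1 ord_max.
rewrite -FE -(card_imset F (imset_inj lift_max_inj)).
apply: gamma_k_kneser_le.
- exact (uniform_imset lift_max_inj Fr).
- exact (lift_dominating lift_max_inj (@codom_lift_max n) Fr Fdom Fstar).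
Qed.
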